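(* Let ${\cal G}$ be a colored graph and $L$ a line of color $i$ joining vertices $v$ and $w$, such that the bubbles of colors $\widehat i$ containing $v$ and $w$, call them $B_a$ and $B_b$, are distinct. Let ${\cal G}-L$ be the graph obtained by contracting $L$. Then (i) for each color $k\neq i$, the bubble of colors $\widehat k$ of ${\cal G}$ containing $v$ (which also contains $w$) becomes a bubble of ${\cal G}-L$ with two fewer vertices, three fewer lines, one fewer face and the same genus; all other bubbles of colors $\widehat k$, $k\neq i$, are unchanged; (ii) $B_a$ and $B_b$ are replaced by a single bubble of colors $\widehat i$ with $|n_a|+|n_b|-2$ vertices, $|l_a|+|l_b|-3$ lines, $|f_a|+|f_b|-3$ faces, and genus $g_a+g_b$. In particular, if $B_a$ is planar the merged bubble has genus $g_b$.
   Context: Colored graph: a finite connected bipartite multigraph (vertices ''black'' or ''white'', no loops) whose edges (''lines'') carry a color in $\{0,1,2,3\}$ such that every vertex is incident to exactly one line of each color. For colors $i\neq j$, a face of colors $ij$ is a connected component of the subgraph formed by the lines of colors $i,j$. For a color $i$, $\widehat{i}=\{0,1,2,3\}\setminus\{i\}$; a bubble of colors $\widehat i$ is a connected component of the subgraph formed by all lines of colors in $\widehat i$; for a bubble $b$, $n_b,l_b$ are its vertices and lines, $f_b$ the faces of ${\cal G}$ with both colors in $\widehat i$ contained in $b$, and its genus is defined by $|n_b|-|l_b|+|f_b|=2-2g_b$; planar means $g_b=0$. Contraction of a line $L$ of color $i$ with endpoints $v,w$ (lying in distinct bubbles of colors $\widehat i$): for each color $j\neq i$ let $a_j$ (resp.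 $b_j$) be the other endpoint of the line of color $j$ at $v$ (resp. at $w$). Delete $v$, $w$ and all lines incident to them, and for each $j\neq i$ add a line of color $j$ between $a_j$ and $b_j$. The result ${\cal G}-L$ is again a colored graph. *)

From HB Require Import structures.
From mathcomp Require Import all_boot all_order all_algebra.
Set Implicit Arguments. Unset Strict Implicit. Unset Printing Implicit Defensive.

(* A colored graph is encoded on a finite ambient type V by its vertex set
   D : {set V} and, for each color c : 'I_4, the map p c : V -> V sending a
   vertex x to the other endpoint of the (unique) line of color c at x. *)

Section ColoredGraphs.
Variable V : finType.
Implicit Types (D : {set V}) (p : 'I_4 -> V -> V) (S : {set 'I_4}) (b : {set V}).

Definition adj p S : rel V := fun x y => [exists c in S, p c x == y].

Definition component p S (x : V) : {set V} := [set y | connect (adj p S) x y].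

Definition colored_graph D p : Prop :=
  [/\ forall c x, x \in D -> p c x \in D,
      forall c x, x \in D -> p c (p c x) = x,
      exists black : V -> bool, forall c x, x \in D -> black (p c x) = ~~ black x,
      D != set0
    & forall x y, x \in D -> y \in D -> connect (adj p setT) x y].

Definition hat (i : 'I_4) : {set 'I_4} := [set~ i].

Definition lines p S b : {set 'I_4 * {set V}} :=
  [set (c, [set x; p c x]) | c in S, x in b].

Definition pairsets S : {set {set 'I_4}} :=
  [set P : {set 'I_4} | (P \subset S) && (#|P| == 2)].

Definition faces p S b : {set {set 'I_4} * {set V}} :=
  [set (P, component p P x) | P in pairsets S, x in b].

Definition genus p S b : rat :=
  ((2 - (#|b|%:R - #|lines p S b|%:R + #|faces p S b|%:R)) / 2)%R.

Definition contr_set D (v w : V) : {set V} := D :\ v :\ w.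
Definition contr_map p (i : 'I_4) (v w : V) : 'I_4 -> V -> V :=
  fun c x => if c == i then p c x
             else if p c x == v then p c w
             else if p c x == w then p c v
             else p c x.
End ColoredGraphs.

From mathcomp Require Import all_boot all_order all_algebra.
From mathcomp Require Import lra zify.
Set Implicit Arguments. Unset Strict Implicit. Unset Printing Implicit Defensive.

(* Contracting [L] only reroutes lines at [v] and [w]: a line of color [j <> i]
   entering [v] now continues to the [j]-neighbour of [w], and vice versa.  Hence a
   path of [G] becomes a path of [G - L] once [v] and [w] are replaced by neighbours
   (these are joined in [G - L] by walking around faces through [v], which never meet
   [w] since [B_a <> B_b]); conversely a path of [G - L] is a path of [G] up to jumps
   between the bubbles of [v] and [w].  So bubbles missing [v] and [w] are unchanged,
   and those through [v] or [w] lose both vertices and merge.  Vertices and lines are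
   then counted directly (a line by its black end).  A face of colors [{c, d}] through
   [v] just loses [v], [w] if [i] is a color of it, and otherwise merges with the face
   through [w]; this gives the face counts and, with them, the genera. *)

Lemma connect_invariant (T : finType) (e : rel T) (P : T -> Prop) x :
  P x -> (forall u u', P u -> e u u' -> P u') -> forall y, connect e x y -> P y.
Proof.
move=> Px step y /connectP [s pth ->].
elim: s x Px pth => [|a s IH] x Px //= /andP [exa pth].
exact: IH (step _ _ Px exa) pth.
Qed.

Lemma cardsU_disjoint (T : finType) (A B : {set T}) :
  [disjoint A & B] -> #|A :|: B| = #|A| + #|B|.
Proof. by move=> /disjoint_setI0 AB; rewrite -cardsUI AB cards0 addn0. Qed.

Section Adjacency.
Variables (V : finType) (p : 'I_4 -> V -> V).
Implicit Types (S P : {set 'I_4}) (b : {set V}).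

Lemma adjP S x y : reflect (exists2 c, c \in S & p c x = y) (adj p S x y).
Proof.
apply: (iffP existsP) => [[c /andP [cS /eqP <-]]|[c cS <-]]; exists c => //.
by rewrite cS eqxx.
Qed.

Lemma connect_p S c x : c \in S -> connect (adj p S) x (p c x).
Proof. by move=> cS; apply/connect1/adjP; exists c. Qed.

Lemma connect_subcolors S P x y :
  P \subset S -> connect (adj p P) x y -> connect (adj p S) x y.
Proof.
move=> /subsetP PS; apply: connect_sub => a _ /adjP [c cP <-].
exact/connect_p/PS.
Qed.

Lemma component_refl S x : x \in component p S x.
Proof. by rewrite inE connect0. Qed.

Lemma component_p S c x y :
  c \in S -> y \in component p S x -> p c y \in component p S x.
Proof. by rewrite !inE => cS cxy; apply: connect_trans cxy (connect_p _ cS). Qed.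

Lemma component_subcolors S P x y z : P \subset S ->
  y \in component p S x -> connect (adj p P) y z -> z \in component p S x.
Proof.
by rewrite !inE => PS cxy cyz; apply: connect_trans cxy (connect_subcolors PS cyz).
Qed.

Lemma card_component_classesU P (A B : {set V}) : [disjoint A & B] ->
  (forall y z, y \in B -> connect (adj p P) y z -> z \in B) ->
  #|[set component p P x | x in A :|: B]| =
  #|[set component p P x | x in A]| + #|[set component p P x | x in B]|.
Proof.
move=> AB B_closed; rewrite imsetU cardsU_disjoint //.
rewrite -setI_eq0; apply/set0Pn => -[X /setIP [/imsetP [a aA ->] /imsetP [b bB e]]].
have : a \in component p P b by rewrite -e component_refl.
by rewrite inE => /(B_closed _ _ bB); rewrite (disjointFr AB aA).
Qed.

Lemma card_faces S b :
  #|faces p S b| = (\sum_(P in pairsets S) #|[set component p P x | x in b]|)%N.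
Proof.
rewrite -sum1_card (partition_big fst (mem (pairsets S))) /=; last first.
  by move=> [P X] /imset2P [P' x P'S _ [-> _]].
apply: eq_bigr => P PS; rewrite sum1_card.
have Pinj : injective (pair P : {set V} -> {set 'I_4} * {set V}) by move=> X Y [].
rewrite -(card_imset _ Pinj); apply: eq_card => F.
rewrite unfold_in; apply/andP/imsetP.
  case=> /imset2P [P' x P'S xb ->] /= /eqP ->.
  by exists (component p P x) => //; apply/imsetP; exists x.
by case=> X /imsetP [x xb ->] ->; split => //=; apply/imset2P; exists P x.
Qed.

End Adjacency.

Lemma card_hat k : #|hat k| = 3.
Proof. by rewrite cardsC1 card_ord. Qed.

Lemma sum_pairsets_notin (i : 'I_4) S :
  (\sum_(P in pairsets S) (i \notin P))%N = #|pairsets (S :\ i)|.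
Proof.
rewrite -sum1_card [RHS](eq_bigl (fun P => (P \in pairsets S) && (i \notin P))).
  by rewrite big_mkcondr; apply: eq_bigr => P _; case: (i \in P).
by move=> P; rewrite !inE subsetD1 -andbA [(i \notin P) && _]andbC andbA.
Qed.

(* [genus p S b] unfolds to [euler_genus #|b| #|lines p S b| #|faces p S b|]. *)
Definition euler_genus (n l f : nat) : rat := ((2 - (n%:R - l%:R + f%:R)) / 2)%R.

Lemma euler_genus_eq n l f n' l' f' :
  (n + f + l' = n' + f' + l)%N -> euler_genus n l f = euler_genus n' l' f'.
Proof.
move/(congr1 (fun m => m%:R : rat)); rewrite !GRing.natrD => E.
rewrite /euler_genus; lra.
Qed.

Lemma euler_genus_add na la fa nb lb fb n l f :
  (n + 2 = na + nb)%N -> (l + 3 = la + lb)%N -> (f + 3 = fa + fb)%N ->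
  euler_genus n l f = (euler_genus na la fa + euler_genus nb lb fb)%R.
Proof.
move=> /(congr1 (fun m => m%:R : rat)) En /(congr1 (fun m => m%:R : rat)) El.
move=> /(congr1 (fun m => m%:R : rat)); rewrite !GRing.natrD in En El * => Ef.
rewrite /euler_genus; lra.
Qed.

Section Involutions.
Variables (V : finType) (D : {set V}) (p : 'I_4 -> V -> V).
Implicit Types (S : {set 'I_4}) (b : {set V}).
Hypothesis p_in : forall c x, x \in D -> p c x \in D.
Hypothesis pK : forall c x, x \in D -> p c (p c x) = x.

Lemma connect_in S x y : x \in D -> connect (adj p S) x y -> y \in D.
Proof.
move=> xD; apply: (connect_invariant (P := fun y => y \in D)) => // u u' uD.
by case/adjP=> c _ <-; apply: p_in.
Qed.

Lemma connect_sym_in S x y :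
  x \in D -> connect (adj p S) x y -> connect (adj p S) y x.
Proof.
move=> xD; pose P y := y \in D /\ connect (adj p S) y x.
suff /(_ y) Py : forall y, connect (adj p S) x y -> P y by move/Py => [].
apply: connect_invariant => [|u _ [uD cux] /adjP [c cS <-]]; first by [].
split; first exact: p_in.
by apply: connect_trans cux; rewrite -{2}(pK c uD); apply: connect_p.
Qed.

Lemma component_sub S x : x \in D -> component p S x \subset D.
Proof. by move=> xD; apply/subsetP => y; rewrite inE; apply: connect_in. Qed.

Lemma component_eq S x y : x \in D -> y \in component p S x ->
  component p S y = component p S x.
Proof.
move=> xD; rewrite inE => cxy; apply/setP => z; rewrite !inE.
apply/idP/idP; first exact: connect_trans.
by apply: connect_trans; apply: connect_sym_in.
Qed.

Lemma component_disjoint S x y : x \in D -> y \in D ->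
  component p S x != component p S y -> [disjoint component p S x & component p S y].
Proof.
move=> xD yD; rewrite -setI_eq0; apply: contraNT => /set0Pn [z /setIP [zx zy]].
by apply/eqP; rewrite -(component_eq xD zx) (component_eq yD zy).
Qed.

Variable black : V -> bool.
Hypothesis black_p : forall c x, x \in D -> black (p c x) = ~~ black x.

Lemma p_neq c x : x \in D -> p c x != x.
Proof. by move=> xD; apply/eqP => e; move: (black_p c xD); rewrite e; case: (black x). Qed.

(* Every line joins a black and a white vertex, so lines are counted by their black end. *)
Lemma card_lines S b : b \subset D ->
  (forall c x, c \in S -> x \in b -> p c x \in b) ->
  #|lines p S b| = (#|S| * #|[set x in b | black x]|)%N.
Proof.
move=> /subsetP bD bS; rewrite -cardsX.
pose line (cx : 'I_4 * V) := (cx.1, [set cx.2; p cx.1 cx.2]).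
have -> : lines p S b = line @: setX S [set x in b | black x].
  apply/setP => l; apply/imset2P/imsetP => [[c x cS xb ->]|[[c x]]].
    have [bx|wx] := boolP (black x).
      by exists (c, x) => //; rewrite !inE cS xb bx.
    exists (c, p c x); first by rewrite !inE cS bS //= black_p ?bD.
    by rewrite /line /= pK ?bD // setUC.
  by rewrite !inE /= => /andP [cS /andP [xb _]] ->; exists c x.
apply: card_in_imset => -[c x] [c' y] /[!inE] /= /andP [_ /andP [xb bx]].
move=> /andP [_ /andP [yb by_]] [<- exy]; congr pair.
have : y \in [set x; p c x] by rewrite exy !inE eqxx.
rewrite !inE => /orP [/eqP -> //|/eqP yp].
by move: by_; rewrite yp black_p ?bD // bx.
Qed.

End Involutions.

Section Contraction.
Variables (V : finType) (D : {set V}) (p : 'I_4 -> V -> V) (black : V -> bool).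
Variables (i : 'I_4) (v w : V).
Implicit Types (S P : {set 'I_4}) (b : {set V}).
Hypothesis p_in : forall c x, x \in D -> p c x \in D.
Hypothesis pK : forall c x, x \in D -> p c (p c x) = x.
Hypothesis black_p : forall c x, x \in D -> black (p c x) = ~~ black x.
Hypothesis v_in : v \in D.
Hypothesis p_iv : p i v = w.
Hypothesis v_not_w : ~~ connect (adj p (hat i)) v w.

Local Notation D' := (contr_set D v w).
Local Notation p' := (contr_map p i v w).

Lemma w_in : w \in D. Proof. by rewrite -p_iv p_in. Qed.
Lemma p_iw : p i w = v. Proof. by rewrite -p_iv pK. Qed.
Lemma neq_wv : w != v. Proof. by rewrite -p_iv (p_neq black_p). Qed.
Lemma black_w : black w = ~~ black v. Proof. by rewrite -p_iv black_p. Qed.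

Lemma neq_pvw c : c != i -> p c v != w.
Proof.
move=> ci; apply: contraNneq v_not_w => <-.
by apply: connect_p; rewrite !inE.
Qed.

Lemma neq_pwv c : c != i -> p c w != v.
Proof. by move=> ci; apply: contraNneq (neq_pvw ci) => <-; rewrite pK ?w_in. Qed.

Lemma in_contr_set x : (x \in D') = [&& x != v, x != w & x \in D].
Proof. by rewrite !inE; case: (x != v); case: (x != w). Qed.

Lemma contr_set_sub x : x \in D' -> x \in D.
Proof. by rewrite in_contr_set => /and3P []. Qed.

Variant contr_map_spec c x : V -> Type :=
  | ContrColor of c = i : contr_map_spec c x (p c x)
  | ContrAtV of c != i & p c x = v : contr_map_spec c x (p c w)
  | ContrAtW of c != i & p c x = w : contr_map_spec c x (p c v)
  | ContrAway of c != i & p c x != v & p c x != w : contr_map_spec c x (p c x).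

Lemma contr_mapP c x : contr_map_spec c x (p' c x).
Proof.
rewrite /contr_map; have [->|ci] := eqVneq c i; first exact: ContrColor.
have [|pv] := eqVneq (p c x) v; first exact: ContrAtV.
by have [|pw] := eqVneq (p c x) w; [apply: ContrAtW | apply: ContrAway].
Qed.

Lemma contr_map_away c x : c != i -> p c x != v -> p c x != w -> p' c x = p c x.
Proof. by rewrite /contr_map => /negbTE -> /negbTE -> /negbTE ->. Qed.

Lemma contr_map_i x : p' i x = p i x.
Proof. by rewrite /contr_map eqxx. Qed.

Lemma contr_map_pv c : c != i -> p' c (p c v) = p c w.
Proof. by move=> ci; rewrite /contr_map (negbTE ci) pK // eqxx. Qed.

Lemma contr_map_pw c : c != i -> p' c (p c w) = p c v.
Proof. by move=> ci; rewrite /contr_map (negbTE ci) pK ?w_in // (negbTE neq_wv) eqxx. Qed.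

Lemma pv_in_contr c : c != i -> p c v \in D'.
Proof. by move=> ci; rewrite in_contr_set (p_neq black_p) // neq_pvw // p_in. Qed.

Lemma pw_in_contr c : c != i -> p c w \in D'.
Proof. by move=> ci; rewrite in_contr_set neq_pwv // (p_neq black_p) ?w_in // p_in ?w_in. Qed.

Lemma contr_closed c x : x \in D' -> p' c x \in D'.
Proof.
rewrite in_contr_set => /and3P [xv xw xD].
case: contr_mapP => [->|ci _|ci _|ci pv pw].
- rewrite in_contr_set p_in // andbT; apply/andP; split; apply/eqP => e.
    by move/eqP: xw; rewrite -p_iv -e pK.
  by move/eqP: xv; rewrite -p_iw -e pK.
- exact: pw_in_contr.
- exact: pv_in_contr.
- by rewrite in_contr_set pv pw p_in.
Qed.

Lemma contr_mapK c x : x \in D' -> p' c (p' c x) = x.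
Proof.
rewrite in_contr_set => /and3P [xv xw xD].
case: (contr_mapP c x) => [->|ci e|ci e|ci pv pw].
- by rewrite contr_map_i pK.
- by rewrite contr_map_pw // -e pK.
- by rewrite contr_map_pv // -e pK.
- by rewrite contr_map_away ?pK.
Qed.

Lemma black_contr c x : x \in D' -> black (p' c x) = ~~ black x.
Proof.
move/contr_set_sub => xD.
case: contr_mapP => [_|_ e|_ e|_ _ _]; rewrite ?black_p ?w_in //.
- by rewrite black_w -(black_p c xD) e negbK.
- by rewrite -black_w -e black_p.
Qed.

Lemma exists_color_other S : 1 < #|S| -> exists2 c0, c0 \in S & c0 != i.
Proof.
move=> S_gt1; have /set0Pn [c0] : S :\ i != set0.
  rewrite -card_gt0; move: S_gt1; rewrite (cardsD1 i S).
  by case: (i \in S); rewrite ?add1n ?add0n ?ltnS // => /ltnW.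
by rewrite !inE => /andP [c0i c0S]; exists c0.
Qed.

Lemma connect_neq_w x : connect (adj p (hat i)) v x -> x != w.
Proof. by apply: contraTneq => ->. Qed.

(* Following the face of colors [c, d] through [v] from [p c v] back to [p d v]:
   the face stays in the bubble of [v], so it never meets [w], and
   after removing [v] it is still a path of the contracted graph. *)
Lemma connect_contr_face S c d : c \in S -> d \in S -> c != i -> d != i ->
  connect (adj p' S) (p c v) (p d v).
Proof.
move=> cS dS ci di; have [<-|cd] := eqVneq c d; first exact: connect0.
pose g x := if x \in D then p c (p d x) else x.
have g_inj : injective g.
  move=> x y; rewrite /g; case xD: (x \in D); case yD: (y \in D) => // e.
  - by rewrite -(pK d xD) -(pK d yD) -(pK c (p_in d xD)) e pK // p_in.
  - by move: (p_in c (p_in d xD)); rewrite e yD.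
  - by move: (p_in c (p_in d yD)); rewrite -e xD.
pose x0 := p c v.
have x0_to_pdv : fconnect g x0 (p d v).
  rewrite fconnect_sym //; have -> : x0 = g (p d v) by rewrite /g p_in // pK.
  exact: fconnect1.
have [n /eqP gn n_min] := find_ex_minn (ex_intro (fun n => iter n g x0 == p d v)
  _ (introT eqP (iter_findex x0_to_pdv))).
suff /(_ n (leqnn n)) [_ _ _] : forall m, m <= n -> [/\ iter m g x0 \in D,
    black (iter m g x0) = ~~ black v, connect (adj p (hat i)) v (iter m g x0)
  & connect (adj p' S) x0 (iter m g x0)] by rewrite gn.
have hat_c : c \in hat i by rewrite !inE.
have hat_d : d \in hat i by rewrite !inE.
elim=> [_|m IH lt_mn].
  by split; rewrite /= ?p_in ?black_p ?connect0 // connect_p.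
have [yD by_ vy x0y] := IH (ltnW lt_mn); set y := iter m g x0 in yD by_ vy x0y *.
have -> : iter m.+1 g x0 = p c (p d y) by rewrite iterS /g yD.
have vz : connect (adj p (hat i)) v (p d y) := connect_trans vy (connect_p _ _ hat_d).
have vcz : connect (adj p (hat i)) v (p c (p d y)).
  exact: connect_trans vz (connect_p _ _ hat_c).
have z_neq_v : p d y != v.
  by apply: contraTneq lt_mn => dy; rewrite -leqNgt n_min // -dy pK.
have cz_neq_v : p c (p d y) != v.
  by apply/eqP => e; move: by_; rewrite -e !black_p ?p_in //; case: (black y).
split.
- by rewrite !p_in.
- by rewrite !black_p ?p_in // by_ negbK.
- exact: vcz.
apply: connect_trans x0y (connect_trans (connect_p p' y dS) _).
rewrite contr_map_away ?connect_neq_w //.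
by have := connect_p p' (p d y) cS; rewrite contr_map_away ?connect_neq_w.
Qed.

Lemma vw_in a : a \in [set v; w] -> a \in D.
Proof. by case/set2P => ->; [exact: v_in | exact: w_in]. Qed.

Lemma p_i_vw a : a \in [set v; w] -> p i a \in [set v; w].
Proof. by case/set2P => ->; rewrite ?p_iv ?p_iw !inE eqxx ?orbT. Qed.

Lemma p_vw_notin c a : c != i -> a \in [set v; w] -> p c a \notin [set v; w].
Proof.
move=> ci /set2P [] ->; rewrite !inE negb_or.
  by rewrite (p_neq black_p) ?neq_pvw.
by rewrite neq_pwv ?(p_neq black_p) ?w_in.
Qed.

Lemma p_vw_in_contr c a : c != i -> a \in [set v; w] -> p c a \in D'.
Proof. by move=> ci /set2P [] ->; [apply: pv_in_contr | apply: pw_in_contr]. Qed.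

Lemma connect_contr_ends S c d x y : c \in S -> d \in S -> c != i -> d != i ->
  x \in [set v; w] -> y \in [set v; w] -> connect (adj p' S) (p c x) (p d y).
Proof.
move=> cS dS ci di /set2P hx /set2P hy.
apply: (@connect_trans _ _ (p c v)).
  case: hx => ->; first exact: connect0.
  by have := connect_p p' (p c w) cS; rewrite contr_map_pw.
apply: connect_trans (connect_contr_face cS dS ci di) _.
case: hy => ->; first exact: connect0.
by have := connect_p p' (p d v) dS; rewrite contr_map_pv.
Qed.

Definition contr_retract (c0 : 'I_4) (u : V) : V :=
  if u \in [set v; w] then p c0 u else u.

Lemma contr_retract_id c0 u : u != v -> u != w -> contr_retract c0 u = u.
Proof. by move=> uv uw; rewrite /contr_retract !inE (negbTE uv) (negbTE uw). Qed.

Lemma contr_retract_vw c0 a : a \in [set v; w] -> contr_retract c0 a = p c0 a.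
Proof. by rewrite /contr_retract => ->. Qed.

Lemma connect_contr_retract S c0 x y : c0 \in S -> c0 != i -> x \in D ->
  connect (adj p S) x y -> connect (adj p' S) (contr_retract c0 x) (contr_retract c0 y).
Proof.
move=> c0S c0i xD; pose P u := u \in D /\
  connect (adj p' S) (contr_retract c0 x) (contr_retract c0 u).
suff /(_ y) Py : forall u, connect (adj p S) x u -> P u by move/Py => [].
apply: connect_invariant => [|u u' [uD xu] /adjP [c cS <-]]; first by [].
split; first exact: p_in.
apply: connect_trans xu _; rewrite /contr_retract.
have [uvw|u_out] := ifPn.
  have [->|ci] := eqVneq c i.
    by rewrite p_i_vw //; apply: connect_contr_ends => //; apply: p_i_vw.
  by rewrite (negbTE (p_vw_notin ci uvw)); apply: connect_contr_ends.
have [pcu_vw|pcu_out] := ifPn.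
  have ci : c != i.
    by apply: contraNneq u_out => ci; rewrite -(pK c uD) {1}ci p_i_vw -?ci.
  by rewrite -{1}(pK c uD); apply: connect_contr_ends.
have <- : p' c u = p c u.
  move: pcu_out; rewrite !inE negb_or => /andP [pv pw].
  by have [->|ci] := eqVneq c i; [rewrite contr_map_i | rewrite contr_map_away].
exact: connect_p.
Qed.

Definition vw_bubble S := component p S v :|: component p S w.

Lemma vw_bubble_connect S z z' :
  z \in vw_bubble S -> connect (adj p S) z z' -> z' \in vw_bubble S.
Proof. by rewrite !inE => /orP [] vz zz'; rewrite (connect_trans vz zz') ?orbT. Qed.

(* Paths of the contracted graph are paths of [G], except that crossing the
   contracted line jumps between the neighbourhoods of [v] and [w]. *)
Lemma connect_contr_inv S x y : x \in D' -> connect (adj p' S) x y ->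
  y \in D' /\ (connect (adj p S) x y \/ x \in vw_bubble S /\ y \in vw_bubble S).
Proof.
move=> xD'; have xD := contr_set_sub xD'.
move: y; apply: (connect_invariant (P := fun y => y \in D' /\
  (connect (adj p S) x y \/ x \in vw_bubble S /\ y \in vw_bubble S))).
  by split => //; left.
move=> u u' [uD' xu] /adjP [c cS <-].
split; first exact: contr_closed.
have uD := contr_set_sub uD'.
have [->|[mu mu']] : p' c u = p c u \/ u \in vw_bubble S /\ p' c u \in vw_bubble S.
- case: contr_mapP => [_|_ e|_ e|_ _ _]; [by left | right.. | by left].
  + by rewrite !inE -(pK c uD) e !connect_p ?orbT.
  + by rewrite !inE -(pK c uD) e !connect_p ?orbT.
- case: xu => [xu|[mx mu]]; [left|right]; first exact: connect_trans xu (connect_p _ _ cS).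
  by split=> //; apply: vw_bubble_connect mu (connect_p _ _ cS).
right; split => //; case: xu => [xu|[] //].
exact: vw_bubble_connect mu (connect_sym_in p_in pK xD xu).
Qed.

Lemma vw_bubbleP S z : reflect (exists2 a, a \in [set v; w] & connect (adj p S) a z)
  (z \in vw_bubble S).
Proof.
rewrite !inE; apply: (iffP orP) => [[vz|wz]|[a /set2P [] -> az]]; last 2 first.
- by left.
- by right.
- by exists v; rewrite ?set21.
- by exists w; rewrite ?set22.
Qed.

Lemma contr_component_far S x : 1 < #|S| -> x \in D' -> x \notin vw_bubble S ->
  component p' S x = component p S x.
Proof.
move=> /exists_color_other [c0 c0S c0i] xD' xout; have xD := contr_set_sub xD'.
apply/setP => y; rewrite !inE; apply/idP/idP => xy.
  by have [_ [//|[xin _]]] := connect_contr_inv xD' xy; rewrite xin in xout.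
have yout : y \notin vw_bubble S.
  by apply: contra xout => yin; apply: vw_bubble_connect yin (connect_sym_in p_in pK xD xy).
have yv : y != v by apply: contraNneq yout => ->; rewrite !inE connect0.
have yw : y != w by apply: contraNneq yout => ->; rewrite !inE connect0 orbT.
move: xD'; rewrite in_contr_set => /and3P [xv xw _].
by have := connect_contr_retract c0S c0i xD xy; rewrite !contr_retract_id.
Qed.

Lemma contr_component_near S x : 1 < #|S| -> x \in D' -> x \in vw_bubble S ->
  component p' S x = vw_bubble S :\ v :\ w.
Proof.
move=> /exists_color_other [c0 c0S c0i] xD' xin; have xD := contr_set_sub xD'.
apply/setP => y; rewrite inE !in_setD1; apply/idP/and3P => [xy|[yw yv yin]].
  have [yD' [xy'|[_ yin]]] := connect_contr_inv xD' xy;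
    move: yD'; rewrite in_contr_set => /and3P [yv yw _]; split => //.
  exact: vw_bubble_connect xin xy'.
have [a avw ax] := vw_bubbleP _ _ xin; have [b bvw by_] := vw_bubbleP _ _ yin.
have ax' := connect_contr_retract c0S c0i (vw_in avw) ax.
have by' := connect_contr_retract c0S c0i (vw_in bvw) by_.
move: xD'; rewrite in_contr_set => /and3P [xv xw _].
rewrite contr_retract_vw // contr_retract_id // in ax'.
rewrite contr_retract_vw // contr_retract_id // in by'.
apply: connect_trans (connect_sym_in contr_closed contr_mapK (p_vw_in_contr c0i avw) ax') _.
exact: connect_trans (connect_contr_ends c0S c0S c0i c0i avw bvw) by'.
Qed.

Lemma contr_component_vw S : 1 < #|S| ->
  exists2 x, x \in D' & component p' S x = vw_bubble S :\ v :\ w.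
Proof.
move=> S_gt1; have [c0 c0S c0i] := exists_color_other S_gt1.
exists (p c0 v); first exact: pv_in_contr.
by apply: contr_component_near; rewrite ?pv_in_contr // !inE connect_p.
Qed.

Lemma vw_bubble_component S x y : x \in D -> y \in component p S x ->
  (x \in vw_bubble S) = (y \in vw_bubble S).
Proof.
rewrite inE => xD xy; apply/idP/idP => [xU|yU]; first exact: vw_bubble_connect xy.
exact: vw_bubble_connect yU (connect_sym_in p_in pK xD xy).
Qed.

Lemma vw_bubble_sub S : vw_bubble S \subset D.
Proof. by rewrite subUset !component_sub ?w_in. Qed.

Lemma v_in_vw_bubble S : v \in vw_bubble S.
Proof. by rewrite !inE connect0. Qed.

Lemma w_in_vw_bubble S : w \in vw_bubble S.
Proof. by rewrite !inE connect0 orbT. Qed.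

Lemma contr_unchanged S x : 1 < #|S| -> x \in D -> x \notin vw_bubble S ->
  [/\ x \in D', component p' S x = component p S x
    & forall c y, c \in S -> y \in component p S x -> p' c y = p c y].
Proof.
move=> S_gt1 xD xout.
have out_vw y : y \in component p S x -> (y != v) && (y != w).
  move=> xy; rewrite (vw_bubble_component xD xy) in xout.
  by apply/andP; split; apply: contraNneq xout => ->; rewrite ?v_in_vw_bubble ?w_in_vw_bubble.
have xD' : x \in D'.
  by have /andP [xv xw] := out_vw _ (component_refl _ _ _); rewrite in_contr_set xv xw.
split => //; first exact: contr_component_far.
move=> c y cS xy; have [->|ci] := eqVneq c i; first exact: contr_map_i.
by have /andP [pv pw] := out_vw _ (component_p cS xy); rewrite contr_map_away.
Qed.

Lemma card_setD_vw (A : {set V}) : v \in A -> w \in A -> #|A :\ v :\ w| + 2 = #|A|.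
Proof.
by move=> vA wA; rewrite (cardsD1 v A) (cardsD1 w (A :\ v)) vA !inE neq_wv wA addnC.
Qed.

Lemma card_black_setD_vw (A : {set V}) : v \in A -> w \in A ->
  #|[set y in A :\ v :\ w | black y]| + 1 = #|[set y in A | black y]|.
Proof.
move=> vA wA; set X := [set y in A | black y].
have -> : [set y in A :\ v :\ w | black y] = X :\ v :\ w.
  by apply/setP => y; rewrite !inE; case: (y != w); case: (y != v).
rewrite (cardsD1 v X) (cardsD1 w (X :\ v)) !inE neq_wv vA wA black_w.
by case: (black v); rewrite /= ?add0n addnC.
Qed.

Lemma card_contr_lines S : 1 < #|S| ->
  #|lines p' S (vw_bubble S :\ v :\ w)| + #|S| =
  #|S| * #|[set y in vw_bubble S | black y]|.
Proof.
move=> /contr_component_vw [x xD' ex].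
rewrite -ex (card_lines contr_mapK black_contr (component_sub contr_closed _ xD')); last first.
  by move=> c y; apply: component_p.
by rewrite ex -(card_black_setD_vw (v_in_vw_bubble S) (w_in_vw_bubble S)) mulnDr muln1.
Qed.

Lemma component_v_eq_w P : (component p P v == component p P w) = (i \in P).
Proof.
apply/eqP/idP => [e|iP]; last first.
  have vw : w \in component p P v by rewrite inE -p_iv connect_p.
  by rewrite (component_eq p_in pK v_in vw).
apply: contraTT v_not_w => iP; rewrite negbK.
have : w \in component p P v by rewrite e component_refl.
rewrite inE; apply: connect_subcolors; apply/subsetP => c cP.
by rewrite !inE; apply: contraNneq iP => <-.
Qed.

Section FaceClasses.
Variables (P : {set 'I_4}) (b : {set V}).
Hypothesis P_gt1 : 1 < #|P|.
Hypothesis b_sub : b \subset D.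
Hypothesis v_b : v \in b.
Hypothesis b_closed : forall y z, y \in b -> connect (adj p P) y z -> z \in b.

Local Notation classes := [set component p P x | x in b].

Lemma contr_face_classes :
  [set component p' P x | x in b :\ v :\ w] = (vw_bubble P :\ v :\ w) |:
    (classes :\: [set component p P v; component p P w]).
Proof.
have [c0 c0P c0i] := exists_color_other P_gt1.
have b_D' x : x \in b :\ v :\ w -> x \in D'.
  by rewrite in_contr_set !inE => /and3P [-> -> /(subsetP b_sub)].
apply/setP => X; rewrite in_setU1; apply/imsetP/idP => [[x xb ->]|].
  have xD' := b_D' x xb; have [xU|xU] := boolP (x \in vw_bubble P).
    by rewrite (contr_component_near P_gt1 xD' xU) eqxx.
  rewrite (contr_component_far P_gt1 xD' xU) in_setD imset_f ?andbT; last first.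
    by move: xb; rewrite !inE => /and3P [].
  apply/orP; right; move: xU; apply: contra => /set2P [] e.
    by rewrite inE -e component_refl.
  by rewrite inE -e component_refl orbT.
case/orP => [/eqP ->|].
  have pv_b : p c0 v \in b :\ v :\ w.
    by rewrite !inE neq_pvw // (p_neq black_p) // (b_closed v_b (connect_p _ _ c0P)).
  exists (p c0 v) => //; rewrite contr_component_near ?b_D' //.
  by rewrite !inE connect_p.
rewrite in_setD => /andP [XC /imsetP [x xb eX]].
have xU : x \notin vw_bubble P.
  move: XC; apply: contra => /setUP [] xC; rewrite eX (component_eq p_in pK _ xC) ?w_in //.
    exact: set21.
  exact: set22.
have xv : x != v by apply: contraNneq xU => ->; apply: v_in_vw_bubble.
have xw : x != w by apply: contraNneq xU => ->; apply: w_in_vw_bubble.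
have xb' : x \in b :\ v :\ w by rewrite !inE xv xw.
by exists x => //; rewrite eX contr_component_far ?b_D'.
Qed.

Hypothesis w_b : w \in b.

Lemma card_contr_face_classes :
  #|[set component p' P x | x in b :\ v :\ w]| + (i \notin P) = #|classes|.
Proof.
have [c0 c0P c0i] := exists_color_other P_gt1.
set C2 := [set component p P v; component p P w].
have N_notin : vw_bubble P :\ v :\ w \notin classes :\: C2.
  apply/negP => /setDP [/imsetP [x xb eN]]; apply/negP; rewrite negbK.
  have pv_x : p c0 v \in component p P x.
    by rewrite -eN !inE neq_pvw // (p_neq black_p) // connect_p.
  have pv_v : p c0 v \in component p P v by rewrite inE connect_p.
  rewrite eN -(component_eq p_in pK (subsetP b_sub _ xb) pv_x).
  by rewrite (component_eq p_in pK v_in pv_v) set21.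
have C2_sub : C2 \subset classes by apply/subsetP => X /set2P [] ->; apply: imset_f.
rewrite contr_face_classes cardsU1 N_notin -(cardsID C2 classes) (setIidPr C2_sub).
by rewrite cards2 component_v_eq_w add1n addSn addnC.
Qed.

End FaceClasses.

Lemma card_contr_faces S :
  #|faces p' S (vw_bubble S :\ v :\ w)| + #|pairsets (S :\ i)| =
  (\sum_(P in pairsets S) #|[set component p P x | x in vw_bubble S]|)%N.
Proof.
rewrite card_faces -sum_pairsets_notin -big_split /=.
apply: eq_bigr => P; rewrite inE => /andP [PS /eqP P2].
apply: card_contr_face_classes; rewrite ?P2 ?vw_bubble_sub ?v_in_vw_bubble ?w_in_vw_bubble //.
by move=> y z yU yz; apply: vw_bubble_connect yU (connect_subcolors PS yz).
Qed.

Lemma contr_bubble_through S : i \in S -> #|S| = 3 ->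
  let B := component p S v in let B' := B :\ v :\ w in
  [/\ w \in B /\ (exists2 x, x \in D' & component p' S x = B'),
      #|B'| + 2 = #|B|,
      #|lines p' S B'| + 3 = #|lines p S B|,
      #|faces p' S B'| + 1 = #|faces p S B| /\ genus p' S B' = genus p S B
    & forall x, x \in D -> x \notin B ->
        [/\ x \in D', component p' S x = component p S x
          & forall c y, c \in S -> y \in component p S x -> p' c y = p c y]].
Proof.
move=> iS S3 B B'; have S_gt1 : 1 < #|S| by rewrite S3.
have wB : w \in B by rewrite inE -p_iv connect_p.
have U_B : vw_bubble S = B by rewrite /vw_bubble (component_eq p_in pK v_in wB) setUid.
have Sv2 : #|S :\ i| = 2 by move: S3; rewrite (cardsD1 i) iS => -[].
have n_eq : #|B'| + 2 = #|B| by rewrite card_setD_vw // inE connect0.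
have l_eq : #|lines p' S B'| + 3 = #|lines p S B|.
  rewrite (card_lines pK black_p (component_sub p_in _ v_in)) => [|c y]; last exact: component_p.
  by have := card_contr_lines S_gt1; rewrite S3 U_B.
have f_eq : #|faces p' S B'| + 1 = #|faces p S B|.
  by have := card_contr_faces S; rewrite U_B cards_draws Sv2 binn !card_faces.
split=> //; first by split=> //; rewrite /B' -U_B; apply: contr_component_vw.
  by split=> //; apply: euler_genus_eq; lia.
by move=> x xD; rewrite -U_B; apply: contr_unchanged.
Qed.

Lemma contr_bubbles_merge S : i \notin S -> #|S| = 3 ->
  let Ba := component p S v in let Bb := component p S w in
  let M := (Ba :|: Bb) :\ v :\ w in
  [/\ (exists2 x, x \in D' & component p' S x = M),
      #|M| + 2 = #|Ba| + #|Bb| /\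
      #|lines p' S M| + 3 = #|lines p S Ba| + #|lines p S Bb|,
      #|faces p' S M| + 3 = #|faces p S Ba| + #|faces p S Bb|,
      (genus p' S M = genus p S Ba + genus p S Bb)%R /\
      (genus p S Ba = 0%R -> genus p' S M = genus p S Bb)
    & forall x, x \in D -> x \notin Ba -> x \notin Bb ->
        [/\ x \in D', component p' S x = component p S x
          & forall c y, c \in S -> y \in component p S x -> p' c y = p c y]].
Proof.
move=> iS S3 Ba Bb M; have S_gt1 : 1 < #|S| by rewrite S3.
have disj : [disjoint Ba & Bb].
  by apply: (component_disjoint p_in pK); rewrite ?w_in ?component_v_eq_w.
have Bb_closed P y z : P \subset S -> y \in Bb -> connect (adj p P) y z -> z \in Bb.
  exact: component_subcolors.
have n_eq : #|M| + 2 = #|Ba| + #|Bb|.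
  by rewrite card_setD_vw ?v_in_vw_bubble ?w_in_vw_bubble // cardsU_disjoint.
have l_eq : #|lines p' S M| + 3 = #|lines p S Ba| + #|lines p S Bb|.
  rewrite !(card_lines pK black_p (component_sub p_in _ _)) ?w_in //; last 2 first.
  - by move=> c y; apply: component_p.
  - by move=> c y; apply: component_p.
  have := card_contr_lines S_gt1; rewrite S3 -mulnDr => ->; congr (_ * _).
  have -> : [set y in vw_bubble S | black y] = [set y in Ba | black y] :|: [set y in Bb | black y].
    by apply/setP => y; rewrite !inE andb_orl.
  rewrite cardsU_disjoint // -setI_eq0; apply/set0Pn => -[y /setIP [/setIdP [yBa _]]].
  by rewrite inE (disjointFr disj yBa).
have f_eq : #|faces p' S M| + 3 = #|faces p S Ba| + #|faces p S Bb|.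
  have S_i : S :\ i = S.
    by apply/setP => c; rewrite !inE andb_idl // => cS; apply: contraNneq iS => <-.
  have P3 : #|pairsets (S :\ i)| = 3 by rewrite S_i cards_draws S3.
  rewrite -[X in _ + X = _]P3 card_contr_faces.
  rewrite !card_faces -big_split /=; apply: eq_bigr => P; rewrite inE => /andP [PS _].
  by apply: card_component_classesU => // y z; apply: Bb_closed.
have g_eq : (genus p' S M = genus p S Ba + genus p S Bb)%R by apply: euler_genus_add.
split=> //; first by apply: contr_component_vw.
  by split=> // Ba0; rewrite g_eq Ba0 GRing.add0r.
move=> x xD xBa xBb; apply: contr_unchanged => //.
by rewrite /vw_bubble in_setU negb_or; apply/andP.
Qed.

End Contraction.

Unset Implicit Arguments.
Import GRing.Theory Num.Theory.
Local Open Scope ring_scope.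

Theorem mainTheorem3 (V : finType) (D : {set V}) (p : 'I_4 -> V -> V)
    (i : 'I_4) (v w : V)
    (HG : colored_graph D p) (Hv : v \in D) (HL : p i v = w)
    (Hab : component p (hat i) v != component p (hat i) w) :
  let D' := contr_set D v w in
  let p' := contr_map p i v w in
  (* (i) *)
  (forall k : 'I_4, k != i ->
     let B := component p (hat k) v in
     let B' := B :\ v :\ w in
     [/\ w \in B /\ (exists2 x, x \in D' & component p' (hat k) x = B'),
         (#|B'| + 2 = #|B|)%N,
         (#|lines p' (hat k) B'| + 3 = #|lines p (hat k) B|)%N,
         (#|faces p' (hat k) B'| + 1 = #|faces p (hat k) B|)%N /\
         genus p' (hat k) B' = genus p (hat k) B
       & forall x, x \in D -> x \notin B ->
           [/\ x \in D', component p' (hat k) x = component p (hat k) x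
             & forall c y, c \in hat k -> y \in component p (hat k) x -> p' c y = p c y]])
  /\
  (* (ii) *)
  (let Ba := component p (hat i) v in
   let Bb := component p (hat i) w in
   let M := (Ba :|: Bb) :\ v :\ w in
   [/\ (exists2 x, x \in D' & component p' (hat i) x = M),
       (#|M| + 2 = #|Ba| + #|Bb|)%N /\
       (#|lines p' (hat i) M| + 3 = #|lines p (hat i) Ba| + #|lines p (hat i) Bb|)%N,
       (#|faces p' (hat i) M| + 3 = #|faces p (hat i) Ba| + #|faces p (hat i) Bb|)%N,
       genus p' (hat i) M = genus p (hat i) Ba + genus p (hat i) Bb /\
       (genus p (hat i) Ba = 0 -> genus p' (hat i) M = genus p (hat i) Bb)
     & forall x, x \in D -> x \notin Ba -> x \notin Bb ->
         [/\ x \in D', component p' (hat i) x = component p (hat i) x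
           & forall c y, c \in hat i -> y \in component p (hat i) x -> p' c y = p c y]]).
Proof.
move=> D' p'; case: HG => p_in pK [black black_p] _ _.
have v_not_w : ~~ connect (adj p (hat i)) v w.
  apply: contra Hab => vw; apply/eqP/esym/(component_eq p_in pK Hv).
  by rewrite inE.
split=> [k ki|].
  apply: (contr_bubble_through p_in pK black_p Hv HL v_not_w); last exact: card_hat.
  by rewrite !inE eq_sym.
apply: (contr_bubbles_merge p_in pK black_p Hv HL v_not_w); last exact: card_hat.
by rewrite !inE eqxx.
Qed.
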